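(* Let $(G,T,c)$ be a tree instance satisfying the standing assumptions below, rooted at a terminal $r\in T$. Let $e=(u,v)\in E$, and let $f$ be a blocking flow in $I(e)$ such that $f(e)=\max\Psi(e)$. Then $\mathcal{X}=\{V_f(t): t\in T_e\cup\{u\}\}$ is a cut-system in $I(e)$, i.e. a family of pairwise disjoint $t$-sets, one for each $t\in T_e\cup\{u\}$. Moreover, \[2\alpha(f)=f(e)+\sum_{t\in T_e}f(e_t)=\gamma(\mathcal{X})-\kappa(\mathcal{X}).\] Consequently $f$ is a maximum feasible flow in $I(e)$.
   Context: Instance and standing assumptions. $G=(V,E)$ is a finite tree, $T\subseteq V$ is a set of terminals and $c:E\to\mathbb{Z}^+$, where $\mathbb{Z}^+$ denotes the nonnegative integers. We assume that $T$ is exactly the set of leaves of $G$, every non-leaf vertex has degree $3$, and $c(e)\ge1$ for all $e\in E$. For a leaf $t$, $e_t$ is the edge incident to $t$. For vertices $x,y$, $P_{x,y}$ is the path between them. Notation in a graph $H$. For $X\subseteq V(H)$, $E(X)$ is the set of edges of $H$ with exactly one end in $X$. For $h:E\to\mathbb{Z}^+$ we write $h(X)=\sum_{e\in E(X)}h(e)$. Flows. For a tree $H$ with terminal set $S$, a flow is a function $f:E(H)\to\mathbb{Z}^+$ for which there exists $g$, assigning to each unordered pair of distinct $s,s'\in S$ a value $g(s,s')\in\mathbb{Z}^+$, with $f(e)=\sum\{g(s,s'): e\in E(P_{s,s'})\}$ for all $e$. Such a $g$ is a decomposition of $f$. The flow is feasible if $f\le c$. Its value is $\alpha(f)=\frac12\sum_{s\in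 S}f(\{s\})$. A feasible flow is maximum if it maximizes $\alpha$ among feasible flows of the instance. Rooted notions. $G$ is rooted at $r$; an edge is written $(x,y)$ with $x$ the parent of $y$. For a connected $Y\subseteq V\setminus\{r\}$, the parent-edge of $Y$ is the unique edge $(x,y)\in E(Y)$ with $y\in Y$ and $x$ the parent of $y$; the other edges of $E(Y)$ are child-edges of $Y$. For an edge $e=(u,v)$: $V_e$ consists of $u$, $v$ and all descendants of $v$; $G_e=(V_e,E_e)$ is the subgraph induced by $V_e$; $T_e=(T\cap V_e)\setminus\{u\}$; and $I(e)=(G_e,T_e\cup\{u\},c)$ is an instance in which $u$ is also a terminal. In $I(e)$, $E(\cdot)$ and $c(\cdot)$ refer to $G_e$. A $t$-set in $I(e)$ is a vertex set $X\subseteq V_e$ inducing a connected subgraph with $X\cap(T_e\cup\{u\})=\{t\}$. Odd sets. For a family $\mathcal{X}$ of pairwise disjoint vertex sets of $G_e$, an odd set is the vertex set $W$ of a connected component of $G_e-\bigcup_{X\in\mathcal{X}}X$ with $c(W)$ odd. For $X\in\mathcal{X}$, $\mathrm{odd}(X)$ is the family of odd sets whose parent-edge is a child-edge of $X$. We write $\gamma(\mathcal{X})=\sum_{X\in\mathcal{X}}c(X)$, and $\kappa(\mathcal{X})$ for the number of odd sets of $\mathcal{X}$. A set $X\in\mathcal{X}$ with $X\cap T_e=\{t\}$ is blocked by $f$ if $f(e_t)=f(X)=c(X)-|\mathrm{odd}(X)|$. Reachable sets. For a feasible flow $f$ in $I(e)$ and $s\in V_e$, $V_f(s)$ is the set of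 vertices $w\in V_e$ such that, with $w'$ the lowest common ancestor of $s$ and $w$: every edge $e'$ on $P_{s,w'}$ satisfies $c(e')-f(e')\ge1$, and every edge $e'$ on $P_{w',w}$ satisfies $c(e')-f(e')\ge2$. Blocking flows. A feasible flow $f$ in $I(e)$ is blocking if $\{V_f(t): t\in T_e\}$ is a family of pairwise disjoint $t$-sets, one for each $t\in T_e$, all blocked by $f$, with odd sets taken with respect to this family. $\Psi(e)$ is the set of integers $x$ such that $I(e)$ has a blocking flow $f$ with $f(e)=x$. *)

From mathcomp Require Import all_boot.
Set Implicit Arguments. Unset Strict Implicit. Unset Printing Implicit Defensive.

Section TreeInstance.
Variable V : finType.
Variable par : V -> V.   (* par x = parent of x in the tree rooted at r *)
Variable r : V.

Definition anc (x y : V) : bool := fconnect par y x.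

(* the edges of G are the pairs {par z, z} for z <> r; the edge (par z, z)
   is identified with its child end z. *)
Definition is_rooted_tree : Prop := par r = r /\ forall y, anc r y.

Definition children (x : V) : {set V} := [set y | (y != r) && (par y == x)].
Definition deg (x : V) : nat := #|children x| + (x != r).

Definition standing (T : {set V}) (c : V -> nat) : Prop :=
  [/\ forall x, (x \in T) = (deg x == 1),
      forall x, x \notin T -> deg x = 3 &
      forall z, z != r -> 0 < c z].

(* the edge z (i.e. (par z, z)) lies on the path P_{x,y} *)
Definition on_path (x y z : V) : bool := anc z x (+) anc z y.

(* ---- the instance I(e), e = (u, v) with u = par v ---- *)
Variable v : V.

Definition Ee : {set V} := [set z | anc v z].        (* edges of G_e *)
Definition Ve : {set V} := par v |: Ee.
Definition Te (T : {set V}) : {set V} :=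
  [set t in T | (t \in Ve) && (t != par v)].
Definition Sterm (T : {set V}) : {set V} := par v |: Te T.

Definition cutE (X : {set V}) (h : V -> nat) : nat :=
  \sum_(z in Ee | (par z \in X) (+) (z \in X)) h z.

(* f is a flow in I(e): it has a decomposition g over unordered pairs
   (2-element subsets) of terminals of I(e) *)
Definition is_flow (T : {set V}) (f : V -> nat) : Prop :=
  exists g : {set V} -> nat, forall z, z \in Ee ->
    f z = \sum_(P : {set V} | [&& P \subset Sterm T, #|P| == 2 &
                 [exists s in P, exists s' in P, on_path s s' z]]) g P.

Definition feasible (T : {set V}) (c f : V -> nat) : Prop :=
  is_flow T f /\ forall z, z \in Ee -> f z <= c z.

(* 2 * alpha(f) *)
Definition alpha2 (T : {set V}) (f : V -> nat) : nat :=
  \sum_(s in Sterm T) cutE [set s] f.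

Definition adjE (a b : V) : bool :=
  ((b \in Ee) && (par b == a)) || ((a \in Ee) && (par a == b)).

Definition induced (X : {set V}) : rel V :=
  fun a b => [&& a \in X, b \in X & adjE a b].

Definition connected_in (X : {set V}) : Prop :=
  forall x y, x \in X -> y \in X -> connect (induced X) x y.

Definition tset (T : {set V}) (X : {set V}) (t : V) : Prop :=
  [/\ X \subset Ve, connected_in X & X :&: Sterm T = [set t]].

Definition family (I : {set V}) (F : V -> {set V}) : {set {set V}} :=
  [set F t | t in I].
Definition rest (I : {set V}) (F : V -> {set V}) : {set V} :=
  Ve :\: \bigcup_(X in family I F) X.
Definition comp (I : {set V}) (F : V -> {set V}) (w : V) : {set V} :=
  [set w' | connect (induced (rest I F)) w w'].
Definition oddsets (I : {set V}) (F : V -> {set V}) (c : V -> nat)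
  : {set {set V}} :=
  [set W in [set comp I F w | w in rest I F] | odd (cutE W c)].

Definition gamma (I : {set V}) (F : V -> {set V}) (c : V -> nat) : nat :=
  \sum_(X in family I F) cutE X c.
Definition kappa (I : {set V}) (F : V -> {set V}) (c : V -> nat) : nat :=
  #|oddsets I F c|.

Definition parent_edge (Y : {set V}) (z : V) : bool :=
  [&& z \in Y, par z \notin Y & z != r].
Definition child_edge (X : {set V}) (z : V) : bool :=
  [&& z \in Ee, (par z \in X) (+) (z \in X) & ~~ parent_edge X z].
Definition oddX (I : {set V}) (F : V -> {set V}) (c : V -> nat)
  (X : {set V}) : {set {set V}} :=
  [set W in oddsets I F c | [exists z, parent_edge W z && child_edge X z]].

Definition is_lca (s w a : V) : bool :=
  [&& anc a s, anc a w & [forall b, (anc b s && anc b w) ==> anc b a]].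
Definition Vf (c f : V -> nat) (s : V) : {set V} :=
  [set w in Ve | [exists a, is_lca s w a &&
     [forall z, (on_path s a z ==> (f z + 1 <= c z)) &&
                (on_path a w z ==> (f z + 2 <= c z))]]].

(* X (with X ∩ T_e = {t}) is blocked by f; the edge e_t is (par t, t),
   i.e. f(e_t) = f t; odd sets w.r.t. the family {V_f(t) : t in T_e}. *)
Definition blocked (T : {set V}) (c f : V -> nat) (X : {set V}) (t : V)
  : Prop :=
  f t = cutE X f /\
  cutE X f + #|oddX (Te T) (Vf c f) c X| = cutE X c.

Definition blocking (T : {set V}) (c f : V -> nat) : Prop :=
  [/\ feasible T c f,
      forall t, t \in Te T -> tset T (Vf c f t) t,
      forall t t', t \in Te T -> t' \in Te T -> t != t' ->
                   [disjoint Vf c f t & Vf c f t'] &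
      forall t, t \in Te T -> Vf c f t :&: Te T = [set t] /\
                              blocked T c f (Vf c f t) t].

End TreeInstance.

(* Write X_s := V_f(s) for the terminals s of I(e), u included.  X_u is closed
   upwards towards u, and it cannot meet some X_t since that would put u into
   X_t; so the X_s form a cut-system.  Weak duality: a path from s to another
   terminal crosses the cut of X_s an odd number of times, so
   2 alpha(f') <= sum_s f'(X_s) for every feasible f'; a component W of the
   rest contains no terminal, so f'(W) is even and an odd c(W) forces a
   residual edge in its cut, an edge lying in the cut of no other odd set but
   in the cut of some X_s, so sum_s f'(X_s) + kappa <= gamma.  For the
   blocking flow f both bounds are tight: an edge of the cut of W with positive
   residual can only be the top edge of W, with residual 1, whence
   gamma = sum_s f(X_s) + kappa; and the maximality of f(e) forces
   f(X_u) = f(e), because flow between two leaves a, b leaving X_u could be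
   rerouted as flow u-a plus u-b, raising f(e) by 2 while keeping f blocking. *)

From Pilot Require Import Defs.
From mathcomp Require Import all_boot.
Set Implicit Arguments. Unset Strict Implicit. Unset Printing Implicit Defensive.

Section BoolSums.
Variables (I : finType) (A P : pred I).

Lemma sum_bool_card : \sum_(i | A i) (P i : nat) = #|[pred i | A i && P i]|.
Proof. by rewrite -sum1_card big_mkcondr. Qed.

Lemma sum_bool_le1 : (forall i j, A i -> P i -> A j -> P j -> i = j) ->
  \sum_(i | A i) (P i : nat) <= 1.
Proof.
move=> H; rewrite sum_bool_card; apply/card_le1_eqP => i j /andP [Ai Pi] /andP [Aj Pj].
exact: H.
Qed.

Lemma sum_bool_eq1 i0 : A i0 -> P i0 -> (forall j, A j -> P j -> j = i0) ->
  \sum_(i | A i) (P i : nat) = 1.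
Proof.
move=> Ai0 Pi0 H; rewrite sum_bool_card; apply: eq_card1 => j; rewrite inE.
by apply/andP/eqP => [[Aj Pj]|->]; [exact: H|].
Qed.

Lemma sum_bool_eq0 : (forall j, A j -> ~~ P j) -> \sum_(i | A i) (P i : nat) = 0.
Proof. by move=> H; rewrite big1 // => j /H /negbTE ->. Qed.

End BoolSums.

Lemma sum_pred1_cond (I : finType) (A : pred I) i0 : \sum_(i | A i) (i == i0 : nat) = A i0.
Proof.
have [Ai0|nAi0] := boolP (A i0); first by apply: sum_bool_eq1 Ai0 _ _ => // j _ /eqP.
by apply: sum_bool_eq0 => j Aj; apply: contraNneq nAi0 => <-.
Qed.

Lemma sum_even (I : finType) (A : pred I) (F : I -> nat) :
  (forall i, A i -> ~~ odd (F i)) -> ~~ odd (\sum_(i | A i) F i).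
Proof.
move=> H; apply: (big_ind (fun n => ~~ odd n)) => // m n Hm Hn.
by rewrite oddD (negbTE Hm) (negbTE Hn).
Qed.

Lemma addn_xor_and m n (x y : bool) : m + (x (+) y) = n + x + y -> m = n + (x && y).*2.
Proof.
move=> H; apply/eqP; rewrite -(eqn_add2r (x (+) y)) {}H -!addnA eqn_add2l.
by case: x; case: y.
Qed.

Lemma disjointsFl (T : finType) (A B : {set T}) x :
  [disjoint A & B] -> x \in B -> (x \in A) = false.
Proof. by rewrite disjoints_subset => /subsetP AB Hx; apply: contraTF Hx => /AB; rewrite inE. Qed.

Section RootedTree.
Variables (V : finType) (par : V -> V) (r : V).
Hypothesis tree : is_rooted_tree par r.

Local Notation anc := (anc par).
Local Notation on_path := (on_path par).
Local Notation is_lca := (is_lca par).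

Lemma ancP x y : reflect (exists n, iter n par y = x) (anc x y).
Proof.
apply: (iffP idP) => [H|[n <-]]; last exact: fconnect_iter.
by exists (findex par y x); apply: iter_findex.
Qed.

Lemma anc_refl x : anc x x. Proof. exact: connect0. Qed.

Lemma anc_par x : anc (par x) x. Proof. exact: fconnect1. Qed.

Lemma anc_trans x y z : anc x y -> anc y z -> anc x z.
Proof. by move=> Hxy Hyz; apply: connect_trans Hyz Hxy. Qed.

Lemma anc_inv x y : anc x y -> x = y \/ anc x (par y).
Proof.
case/ancP => [[|n]] <-; first by left.
by right; apply/ancP; exists n; rewrite iterSr.
Qed.

Lemma ancE x y : anc x y = (x == y) || anc x (par y).
Proof.
apply/idP/orP => [/anc_inv [->|]|[/eqP ->|H]]; [by left|by right|exact: anc_refl|].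
exact: anc_trans H (anc_par y).
Qed.

Lemma anc_total a b y : anc a y -> anc b y -> anc a b || anc b a.
Proof.
case/ancP => i <- /ancP [j <-]; case: (leqP i j) => [le_ij|/ltnW le_ji].
  by apply/orP; right; apply/ancP; exists (j - i); rewrite -iterD subnK.
by apply/orP; left; apply/ancP; exists (i - j); rewrite -iterD subnK.
Qed.

Lemma root_anc x : anc r x. Proof. by case: tree. Qed.

Lemma iter_par_root n : iter n par r = r.
Proof. by apply: iter_fix; case: tree. Qed.

Lemma anc_root x : anc x r -> x = r.
Proof. by case/ancP => n <-; rewrite iter_par_root. Qed.

Lemma iter_par_cycle n y : iter n.+1 par y = y -> y = r.
Proof.
move=> Hcyc; have HcycM k : iter (k * n.+1) par y = y.
  by elim: k => [//|k IHk]; rewrite mulSn iterD IHk Hcyc.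
case/ancP: (root_anc y) => p Hry.
by rewrite -[LHS](HcycM p) mulnS addnC iterD Hry iter_par_root.
Qed.

Lemma anc_antisym x y : anc x y -> anc y x -> x = y.
Proof.
case/ancP => [[//|a] Hxy] /ancP [b Hyx].
have /iter_par_cycle Hx : iter (a.+1 + b) par x = x by rewrite iterD Hyx.
by rewrite -Hyx Hx iter_par_root.
Qed.

Lemma anc_par_root x : anc x (par x) -> x = r.
Proof. by move=> H; apply: (@iter_par_cycle 0); rewrite /= -(anc_antisym H (anc_par x)). Qed.

Lemma on_pathxx x z : on_path x x z = false.
Proof. exact: addbb. Qed.

Lemma on_path_anc x y z : anc y x -> on_path x y z -> anc z x && ~~ anc z y.
Proof.
move=> Hyx; rewrite /on_path; case Hzy: (anc z y); last by rewrite addbF andbT.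
by rewrite (anc_trans Hzy Hyx).
Qed.

Lemma lcaP s w a : reflect
  [/\ anc a s, anc a w & forall b, anc b s -> anc b w -> anc b a] (is_lca s w a).
Proof.
apply: (iffP and3P) => [[Has Haw /forallP Hlca]|[Has Haw Hlca]]; split=> //.
  by move=> b Hbs Hbw; move/implyP: (Hlca b); apply; rewrite Hbs.
by apply/forallP => b; apply/implyP => /andP [Hbs Hbw]; apply: Hlca.
Qed.

Lemma lca_unique s w a b : is_lca s w a -> is_lca s w b -> a = b.
Proof.
case/lcaP => Has Haw lca_a /lcaP [Hbs Hbw lca_b].
by apply: anc_antisym; [apply: lca_b|apply: lca_a].
Qed.

Lemma lca_ancl s w : anc s w -> is_lca s w s.
Proof. by move=> Hsw; apply/lcaP; split; rewrite ?anc_refl. Qed.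

Lemma lca_ancr s w : anc w s -> is_lca s w w.
Proof. by move=> Hws; apply/lcaP; split; rewrite ?anc_refl. Qed.

Definition in_cut (Y : {set V}) z : bool := (par z \in Y) (+) (z \in Y).

Section Subtree.
Variable v : V.
Hypothesis v_neq_r : v != r.

Local Notation u := (par v).
Local Notation Ee := (Ee par v).
Local Notation Ve := (Ve par v).

Lemma EeE z : (z \in Ee) = anc v z. Proof. by rewrite inE. Qed.

Lemma VeE z : (z \in Ve) = (z == u) || anc v z. Proof. by rewrite !inE. Qed.

Lemma v_Ee : v \in Ee. Proof. by rewrite EeE anc_refl. Qed.

Lemma u_Ve : u \in Ve. Proof. by rewrite !inE eqxx. Qed.

Lemma Ee_Ve z : z \in Ee -> z \in Ve.
Proof. by rewrite VeE EeE => ->; rewrite orbT. Qed.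

Lemma Ve_Ee w : w \in Ve -> w != u -> w \in Ee.
Proof. by rewrite VeE EeE => /orP [->|]. Qed.

Lemma Ee_neq_r z : z \in Ee -> z != r.
Proof. by rewrite EeE; apply: contraTneq => ->; apply: contra v_neq_r => /anc_root ->. Qed.

Lemma u_notin_Ee : u \notin Ee.
Proof. by rewrite EeE; apply: contra v_neq_r => /anc_par_root ->. Qed.

Lemma par_Ee z : z \in Ee -> par z \in Ve.
Proof. by rewrite EeE => /anc_inv [<-|]; [exact: u_Ve|rewrite -EeE; exact: Ee_Ve]. Qed.

Lemma Ve_anc_u w : w \in Ve -> anc u w.
Proof. by rewrite VeE => /orP [/eqP ->|]; [exact: anc_refl|exact: anc_trans (anc_par v)]. Qed.

Lemma Ee_nanc_u z : z \in Ee -> ~~ anc z u.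
Proof.
by rewrite EeE => Hvz; apply: contra u_notin_Ee => Hzu; rewrite EeE (anc_trans Hvz Hzu).
Qed.

Lemma anc_Ve z y : y \in Ve -> anc z y -> (z \in Ee) || anc z u.
Proof.
rewrite VeE => /orP [/eqP -> ->|Hvy Hzy]; first by rewrite orbT.
case/orP: (anc_total Hzy Hvy) => [/anc_inv [->|->]|]; rewrite ?orbT //.
  by rewrite v_Ee.
by rewrite EeE => ->.
Qed.

Lemma lca_Ve s w a : s \in Ve -> w \in Ve -> is_lca s w a -> anc u a /\ a \in Ve.
Proof.
move=> Hs Hw /lcaP [Has _ Hlca].
have Hua : anc u a by apply: Hlca; exact: Ve_anc_u.
split=> //; case/orP: (anc_Ve Hs Has) => [/Ee_Ve //|Hau].
by rewrite (anc_antisym Hau Hua) u_Ve.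
Qed.

Lemma induced_sym X : symmetric (induced par v X).
Proof.
by move=> a b; rewrite /induced /adjE; case: (a \in X); case: (b \in X) => //=; exact: orbC.
Qed.

Section Reachable.
Variables c f : V -> nat.
Local Notation X := (Vf par v c f).

Lemma VfP s w : reflect (w \in Ve /\ exists a, [/\ is_lca s w a,
   forall z, on_path s a z -> f z + 1 <= c z &
   forall z, on_path a w z -> f z + 2 <= c z]) (w \in X s).
Proof.
rewrite /Vf in_set; apply: (iffP andP) => [[Hw /existsP [a /andP [Hl /forallP H]]]|].
  by split=> //; exists a; split=> // z; case/andP: (H z) => /implyP ? /implyP.
case=> Hw [a [Hl slack1 slack2]]; split=> //; apply/existsP; exists a; rewrite Hl.
by apply/forallP => z; apply/andP; split; apply/implyP; [exact: slack1|exact: slack2].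
Qed.

Lemma Vf_self s : s \in Ve -> s \in X s.
Proof.
move=> Hs; apply/VfP; split=> //; exists s.
by split=> [|z|z]; rewrite ?on_pathxx //; exact: lca_ancl (anc_refl s).
Qed.

Lemma Vf_uP w :
  reflect (w \in Ve /\ forall z, anc z w -> ~~ anc z u -> f z + 2 <= c z) (w \in X u).
Proof.
apply: (iffP (VfP u w)) => [[Hw [a [Hl _ slack2]]]|[Hw H]].
  have Eau : a = u by apply: lca_unique Hl (lca_ancl (Ve_anc_u Hw)).
  by split=> // z Hzw Hzu; apply: slack2; rewrite Eau /on_path Hzw (negbTE Hzu).
split=> //; exists u; split=> [|z|z]; rewrite ?on_pathxx //; first exact: lca_ancl (Ve_anc_u Hw).
rewrite /on_path; case Hzu: (anc z u) => /= Hz; last by apply: H; rewrite ?Hzu.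
by rewrite (anc_trans Hzu (Ve_anc_u Hw)) in Hz.
Qed.

Section Witness.
Variables s w a : V.
Hypotheses (Hs : s \in Ve) (Hw : w \in Ve) (Hl : is_lca s w a).
Hypothesis slack1 : forall z, on_path s a z -> f z + 1 <= c z.

Lemma Vf_lca : a \in X s.
Proof.
have [_ HaVe] := lca_Ve Hs Hw Hl; case/lcaP: Hl => Has _ _.
by apply/VfP; split=> //; exists a; split=> [|//|z]; [exact: lca_ancr|rewrite on_pathxx].
Qed.

Lemma Vf_path_source z : anc z s -> ~~ anc z a -> z \in X s.
Proof.
move=> Hzs Hza; have [Hua _] := lca_Ve Hs Hw Hl; case/lcaP: Hl => Has _ _.
apply/VfP; split.
  case/orP: (anc_Ve Hs Hzs) => [/Ee_Ve //|Hzu].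
  by rewrite (anc_trans Hzu Hua) in Hza.
exists z; split=> [|z'|z']; rewrite ?on_pathxx //; first exact: lca_ancr.
rewrite /on_path; case Hz'z: (anc z' z); first by rewrite (anc_trans Hz'z Hzs).
rewrite addbF => Hz's; apply: slack1; rewrite /on_path Hz's; apply/negP => Hz'a.
by case/orP: (anc_total Hzs Has) => H; [rewrite H in Hza|rewrite (anc_trans Hz'a H) in Hz'z].
Qed.

Hypothesis slack2 : forall z, on_path a w z -> f z + 2 <= c z.

Lemma Vf_path_target z : anc z w -> ~~ anc z a -> z \in X s.
Proof.
move=> Hzw Hza; have [Hua _] := lca_Ve Hs Hw Hl; case/lcaP: Hl => Has Haw Hlca.
have Haz : anc a z by case/orP: (anc_total Haw Hzw) => // H; rewrite H in Hza.
apply/VfP; split.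
  case/orP: (anc_Ve Hw Hzw) => [/Ee_Ve //|Hzu].
  by rewrite (anc_trans Hzu Hua) in Hza.
exists a; split=> // [|z'].
  by apply/lcaP; split=> // b Hbs Hbz; apply: Hlca => //; exact: anc_trans Hbz Hzw.
rewrite /on_path; case Hz'a: (anc z' a); first by rewrite (anc_trans Hz'a Haz).
by move=> /= Hz'z; apply: slack2; rewrite /on_path Hz'a (anc_trans Hz'z Hzw).
Qed.

End Witness.

Lemma Vf_par s z : s \in Ve -> z \in X s -> ~~ anc z s -> par z \in X s.
Proof.
move=> Hs Hz Hzs; case/VfP: (Hz) => HzVe [a [Hl slack1 slack2]].
have /lcaP [Has Haz _] := Hl.
case/anc_inv: Haz => [Eaz|Hapz]; first by rewrite -Eaz Has in Hzs.
have [->|Hne] := eqVneq (par z) a; first exact: Vf_lca HzVe Hl slack1.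
apply: (Vf_path_target Hs HzVe Hl slack1 slack2 (anc_par z)).
by apply: contra Hne => Hpza; rewrite (anc_antisym Hpza Hapz).
Qed.

Lemma Vf_child s z : s \in Ve -> z \in Ee -> par z \in X s -> f z + 2 <= c z -> z \in X s.
Proof.
move=> Hs HzE /VfP [HpVe [a [Hl slack1 slack2]]] Hres.
have /lcaP [Has Hapz Hlca] := Hl.
have Hza : ~~ anc z a.
  apply: contra (Ee_neq_r HzE) => Hza.
  by rewrite (anc_par_root (anc_trans Hza Hapz)).
case Hzs: (anc z s); first exact: (Vf_path_source Hs HpVe Hl slack1) _ Hzs Hza.
apply/VfP; split; first exact: Ee_Ve.
exists a; split=> // [|z'].
  apply/lcaP; split=> //; first exact: anc_trans Hapz (anc_par z).
  move=> b Hbs; rewrite ancE => /orP [/eqP Ebz|]; last exact: Hlca.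
  by rewrite Ebz Hzs in Hbs.
rewrite /on_path (ancE z' z); have [->|Hne] /= := eqVneq z' z; first by rewrite (negbTE Hza).
by move=> H; apply: slack2.
Qed.

Lemma Vf_top_saturated t z : t \in Ve -> z \in Ee -> z \in X t -> par z \notin X t ->
  c z <= f z.
Proof.
move=> Ht HzE Hz Hpz.
have Hzt : anc z t by apply: contraNT Hpz; exact: Vf_par.
rewrite leqNgt -addn1; apply: contra Hpz => Hres.
case/VfP: (Hz) => _ [a [Hl slack1 _]].
have Eaz : a = z by apply: lca_unique Hl (lca_ancr Hzt).
subst a; apply/VfP; split; first exact: par_Ee.
have Hpt := anc_trans (anc_par z) Hzt.
exists (par z); split=> [|z'|z']; rewrite ?on_pathxx //; first exact: lca_ancr.
rewrite /on_path; case Hz'p: (anc z' (par z)); first by rewrite (anc_trans Hz'p Hpt).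
rewrite addbF => Hz't; have [->//|Hne] := eqVneq z' z.
by apply: slack1; rewrite /on_path Hz't ancE (negbTE Hne) Hz'p.
Qed.

Lemma Vf_meet_u s w : s \in Ve -> w \in X u -> w \in X s -> u \in X s.
Proof.
move=> Hs /Vf_uP [Hw Hu] /VfP [_ [a [Hl slack1 _]]].
have /lcaP [Has Haw _] := Hl.
apply/VfP; split; first exact: u_Ve.
exists u; split=> [|z|z]; rewrite ?on_pathxx //; first exact: lca_ancr (Ve_anc_u Hs).
rewrite /on_path; case Hzu: (anc z u); first by rewrite (anc_trans Hzu (Ve_anc_u Hs)).
rewrite addbF => Hzs; case Hza: (anc z a); last by apply: slack1; rewrite /on_path Hzs Hza.
by apply: leq_trans (Hu z (anc_trans Hza Haw) (negbT Hzu)); rewrite leq_add2l.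
Qed.

Lemma Vf_u_anc w y : w \in X u -> y \in Ve -> anc y w -> y \in X u.
Proof.
by move=> /Vf_uP [_ H] Hy Hyw; apply/Vf_uP; split=> // z Hz; apply: H (anc_trans Hz Hyw).
Qed.

Lemma Vf_u_par w : w \in X u -> w \in Ee -> par w \in X u.
Proof. by move=> Hw HwE; apply: Vf_u_anc Hw (par_Ee HwE) (anc_par w). Qed.

Lemma Vf_u_connect_u w : w \in X u -> connect (induced par v (X u)) u w.
Proof.
move=> Hw; have /Vf_uP [HwVe _] := Hw; have /ancP [n] := Ve_anc_u HwVe.
elim: n w Hw HwVe => [|n IHn] w Hw HwVe Hn; first by rewrite -Hn connect0.
have [->|Hne] := eqVneq w u; first exact: connect0.
have HwE := Ve_Ee HwVe Hne; have Hpw := Vf_u_par Hw HwE.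
apply: connect_trans (IHn (par w) Hpw (par_Ee HwE) _) (connect1 _); first by rewrite -iterSr.
by rewrite /induced Hpw Hw /adjE HwE eqxx.
Qed.

Lemma Vf_u_connected : connected_in par v (X u).
Proof.
move=> x y Hx Hy; apply: connect_trans (Vf_u_connect_u Hy).
by rewrite (sym_connect_sym (@induced_sym (X u))); exact: Vf_u_connect_u.
Qed.

End Reachable.

Lemma Vf_eq c f f' s : (forall z, f z <= f' z) -> s \in Ve ->
  {in Vf par v c f s, f' =1 f} -> Vf par v c f' s = Vf par v c f s.
Proof.
move=> f_le_f' Hs Heq; apply/setP => w; apply/idP/idP => /VfP [Hw [a [Hl slack1 slack2]]].
  apply/VfP; split=> //; exists a; split=> // z Hz.
    by apply: leq_trans (slack1 z Hz); rewrite leq_add2r.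
  by apply: leq_trans (slack2 z Hz); rewrite leq_add2r.
have /lcaP [Has Haw _] := Hl; apply/VfP; split=> //; exists a; split=> // z.
  case/(on_path_anc Has)/andP => Hzs Hza.
  rewrite Heq; first by apply: slack1; rewrite /on_path Hzs (negbTE Hza).
  exact: (Vf_path_source Hs Hw Hl slack1) _ Hzs Hza.
rewrite /on_path addbC => /(on_path_anc Haw)/andP [Hzw Hza].
rewrite Heq; first by apply: slack2; rewrite /on_path Hzw (negbTE Hza).
exact: (Vf_path_target Hs Hw Hl slack1 slack2) _ Hzw Hza.
Qed.

Section Components.
Variables (I : {set V}) (F : V -> {set V}).
Local Notation rest := (rest par v I F).
Local Notation comp := (Defs.comp par v I F).

Lemma restP x : reflect (x \in Ve /\ forall s, s \in I -> x \notin F s) (x \in rest).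
Proof.
rewrite in_setD andbC; apply: (iffP andP) => [[Hx H]|[Hx H]]; split=> //.
  by move=> s Hs; apply: contra H => Hxs; apply/bigcupP; exists (F s); rewrite ?imset_f.
by apply/bigcupP => -[_ /imsetP [s Hs ->]]; apply/negP; exact: H.
Qed.

Lemma connect_induced X x y : connect (induced par v X) x y -> x \in X -> y \in X.
Proof.
case/connectP => p + -> {y}; elim: p x => [//|y p IHp] x /= /andP [Hxy Hp] Hx.
by apply: IHp Hp _; case/and3P: Hxy.
Qed.

Lemma comp_self w : w \in comp w.
Proof. by rewrite inE connect0. Qed.

Lemma comp_rest w x : w \in rest -> x \in comp w -> x \in rest.
Proof. by move=> Hw; rewrite inE => /connect_induced; apply. Qed.

Lemma comp_eq w x : x \in comp w -> comp x = comp w.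
Proof.
rewrite inE => Hwx; apply/setP => y; rewrite !inE; apply/idP/idP; first exact: connect_trans.
by apply: connect_trans; rewrite (sym_connect_sym (@induced_sym rest)).
Qed.

Lemma comp_adj x y : x \in rest -> y \in rest -> adjE par v x y -> y \in comp x.
Proof. by move=> Hx Hy Hxy; rewrite inE; apply: connect1; rewrite /induced Hx Hy. Qed.

Lemma comp_top_anc w z y : z \in comp w -> par z \notin comp w -> y \in comp w -> anc z y.
Proof.
move=> Hz Hpz; rewrite -(comp_eq Hz) inE => /connectP [p Hp ->].
suff Hpath : forall p x, x \in comp w -> anc z x ->
    path (induced par v rest) x p -> anc z (last x p).
  by apply: Hpath Hp; rewrite ?anc_refl.
elim=> [//|y' q IHq] x Hx Hzx /= /andP [/and3P [Hxr Hyr Hxy] Hq].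
apply: IHq Hq; first by rewrite -(comp_eq Hx); apply: comp_adj.
case/orP: Hxy => /andP [HE /eqP Ey'].
  by rewrite -Ey' in Hzx; exact: anc_trans Hzx (anc_par y').
have [Exz|Hxz] := eqVneq x z.
  suff: par z \in comp w by rewrite (negbTE Hpz).
  by rewrite -Exz Ey' -(comp_eq Hx); apply: comp_adj; rewrite // /adjE HE Ey' eqxx orbT.
by case/anc_inv: Hzx => [Ezx|]; [rewrite Ezx eqxx in Hxz|rewrite Ey'].
Qed.

Lemma comp_top_uniq w z z' : z \in comp w -> par z \notin comp w ->
  z' \in comp w -> par z' \notin comp w -> z = z'.
Proof.
by move=> Hz Hpz Hz' Hpz'; apply: anc_antisym; [exact: comp_top_anc Hz'|exact: comp_top_anc Hz].
Qed.

End Components.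

Lemma sum_anc_u h : \sum_(z in Ee | anc z u) h z = 0.
Proof.
by rewrite big_pred0 // => z; case HzE: (z \in Ee) => //=; apply/negbTE/Ee_nanc_u.
Qed.

Lemma odd_cut_path_u Y s : s \in Ve ->
  odd (\sum_(z in Ee | anc z s) (in_cut Y z : nat)) = (s \in Y) (+) (u \in Y).
Proof.
move=> Hs; have /ancP [n] := Ve_anc_u Hs.
elim: n s Hs => [|n IHn] s Hs Hn; have [->|Hsu] := eqVneq s u; rewrite ?sum_anc_u ?addbb //.
  by rewrite -Hn eqxx in Hsu.
have HsE := Ve_Ee Hs Hsu.
rewrite (bigD1 s) /=; last by rewrite HsE anc_refl.
rewrite (eq_bigl (fun z => (z \in Ee) && anc z (par s))); last first.
  move=> z; rewrite ancE; have [->|_] := eqVneq z s; last by rewrite andbT.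
  rewrite /= andbF; apply/esym/negbTE; apply: contra (Ee_neq_r HsE).
  by case/andP => _ /anc_par_root ->.
by rewrite oddD IHn ?(par_Ee HsE) -?iterSr // oddb addbACA addbb.
Qed.

Lemma cutE_split h h' Y : (forall z, z \in Ee -> h z <= h' z) ->
  cutE par v Y h' = cutE par v Y h + cutE par v Y (fun z => h' z - h z).
Proof.
by move=> Hhh'; rewrite -big_split; apply: eq_bigr => z /andP [/Hhh' Hz _]; rewrite /= subnKC.
Qed.

Lemma sum_cutE (I : finType) (A : pred I) (F : I -> {set V}) h :
  \sum_(i in A) cutE par v (F i) h = \sum_(z in Ee) h z * \sum_(i in A) (in_cut (F i) z : nat).
Proof.
rewrite /cutE; under eq_bigr => i _ do rewrite big_mkcondr /=.
rewrite exchange_big; apply: eq_bigr => z _; rewrite big_distrr /=.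
by apply: eq_bigr => i _; rewrite /in_cut; case: (_ (+) _); rewrite ?muln1 ?muln0.
Qed.

Section Terminals.
Variables (T : {set V}) (c : V -> nat).
Hypothesis standing_Tc : standing par r T c.
Local Notation Te := (Te par v T).
Local Notation St := (Sterm par v T).

Lemma Te_T t : t \in Te -> t \in T.
Proof. by rewrite inE => /andP []. Qed.

Lemma Te_Ee t : t \in Te -> t \in Ee.
Proof. by rewrite inE => /and3P [_]; exact: Ve_Ee. Qed.

Lemma u_notin_Te : u \notin Te.
Proof. by apply: contra u_notin_Ee; exact: Te_Ee. Qed.

Lemma Te_neq_u t : t \in Te -> t != u.
Proof. by apply: contraTneq => ->; exact: u_notin_Te. Qed.

Lemma StermE s : (s \in St) = (s == u) || (s \in Te).
Proof. exact: in_setU1. Qed.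

Lemma u_Sterm : u \in St.
Proof. by rewrite StermE eqxx. Qed.

Lemma Te_Sterm t : t \in Te -> t \in St.
Proof. by rewrite StermE => ->; rewrite orbT. Qed.

Lemma Sterm_Ve s : s \in St -> s \in Ve.
Proof. by rewrite StermE => /orP [/eqP ->|/Te_Ee/Ee_Ve //]; exact: u_Ve. Qed.

Definition term_edge s := if s == u then v else s.

Lemma term_edge_Ee s : s \in St -> term_edge s \in Ee.
Proof. by rewrite /term_edge StermE; case: eqP => [_|_ /Te_Ee //]; rewrite v_Ee. Qed.

Lemma par_neq_Te t z : t \in Te -> z != r -> par z != t.
Proof.
move=> Ht Hz; case: standing_Tc => Hdeg _ _.
have : deg par r t == 1 by rewrite -Hdeg Te_T.
rewrite /deg (Ee_neq_r (Te_Ee Ht)) addn1 eqSS cards_eq0 => /eqP Hch.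
by apply: contraFneq _ (in_set0 z) => Hzt; rewrite -Hch inE Hz Hzt eqxx.
Qed.

Lemma in_cut1 s z : s \in St -> z \in Ee -> in_cut [set s] z = (z == term_edge s).
Proof.
move=> Hs HzE; rewrite /in_cut /term_edge !in_set1.
have [->|Hsu] := eqVneq s u; last first.
  rewrite StermE (negbTE Hsu) /= in Hs.
  by rewrite (negbTE (par_neq_Te Hs (Ee_neq_r HzE))).
have -> : (z == u) = false by apply: contraTF HzE => /eqP ->; exact: u_notin_Ee.
rewrite addbF; apply/eqP/eqP => [Hpz|->//]; move: HzE; rewrite EeE => /anc_inv [//|].
by rewrite Hpz (negbTE (Ee_nanc_u v_Ee)).
Qed.

Lemma cutE1 h s : s \in St -> cutE par v [set s] h = h (term_edge s).
Proof.
move=> Hs; rewrite /cutE (big_pred1 (term_edge s)) // => z /=.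
have [HzE|HzE] := boolP (z \in Ee); first exact: in_cut1.
by apply/esym/negbTE; apply: contraNneq HzE => ->; exact: term_edge_Ee.
Qed.

Lemma alpha2E h : alpha2 par v T h = h v + \sum_(t in Te) h t.
Proof.
rewrite /alpha2 /Sterm big_setU1 /= ?u_notin_Te // cutE1 ?u_Sterm // /term_edge eqxx.
congr (_ + _); apply: eq_bigr => t Ht.
by rewrite cutE1 ?Te_Sterm // /term_edge (negbTE (Te_neq_u Ht)).
Qed.

Definition on_pair (P : {set V}) z := [exists s in P, exists s' in P, on_path s s' z].

Definition terminal_pair (P : {set V}) := (P \subset St) && (#|P| == 2).

Definition cross P Y := cutE par v Y (fun z => on_pair P z : nat).

Lemma on_pair2 s s' z : on_pair [set s; s'] z = on_path s s' z.
Proof.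
apply/existsP/idP => [[a /andP [Ha /existsP [b /andP [Hb Hab]]]]|Hss'].
  move: Ha Hb Hab; rewrite !inE => /orP [] /eqP -> /orP [] /eqP ->;
    by rewrite ?on_pathxx // /on_path addbC.
by exists s; rewrite !inE eqxx /=; apply/existsP; exists s'; rewrite !inE eqxx orbT.
Qed.

Lemma terminal_pairP P : terminal_pair P ->
  exists s s', [/\ s \in St, s' \in St, s != s' & P = [set s; s']].
Proof.
case/andP => /subsetP HP /cards2P [s [s' [Hss' EP]]]; exists s, s'.
by split=> //; apply: HP; rewrite EP !inE eqxx ?orbT.
Qed.

Lemma terminal_pair_on_path s s' z : s \in St -> s' \in St -> s != s' ->
  [&& [set s; s'] \subset St, #|[set s; s']| == 2 & on_pair [set s; s'] z] = on_path s s' z.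
Proof.
move=> Hs Hs' Hss'; rewrite cards2 Hss' on_pair2 /=.
by have -> : [set s; s'] \subset St by apply/subsetP => w; rewrite in_set2 => /orP [] /eqP ->.
Qed.

Lemma odd_cross2 s s' Y : s \in Ve -> s' \in Ve ->
  odd (cross [set s; s'] Y) = (s \in Y) (+) (s' \in Y).
Proof.
move=> Hs Hs'.
have Ecross : cross [set s; s'] Y + (\sum_(z in Ee | in_cut Y z) (anc z s && anc z s')).*2 =
   \sum_(z in Ee | anc z s) (in_cut Y z : nat) + \sum_(z in Ee | anc z s') (in_cut Y z : nat).
  rewrite /cross /cutE !big_mkcondr -muln2 big_distrl -!big_split /=.
  apply: eq_bigr => z _; rewrite on_pair2 /on_path.
  by rewrite /in_cut; case: (par z \in Y); case: (z \in Y); case: (anc z s); case: (anc z s').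
have := congr1 odd Ecross; rewrite !oddD odd_double addbF => ->.
by rewrite !odd_cut_path_u // addbACA addbb addbF.
Qed.

Section FlowDecomposition.
Variables (f : V -> nat) (g : {set V} -> nat).
Hypothesis f_g : forall z, z \in Ee ->
  f z = \sum_(P : {set V} | [&& P \subset St, #|P| == 2 & on_pair P z]) g P.

Lemma cutE_flow Y : cutE par v Y f = \sum_(P | terminal_pair P) g P * cross P Y.
Proof.
rewrite {1}/cutE.
transitivity (\sum_(z in Ee | in_cut Y z) \sum_(P | terminal_pair P) g P * on_pair P z).
  apply: eq_bigr => z /andP [HzE _]; rewrite f_g // big_mkcond [RHS]big_mkcond /=.
  apply: eq_bigr => P _; rewrite /terminal_pair.
  by case: (P \subset St); case: (#|P| == 2); case: (on_pair P z); rewrite ?muln1 ?muln0.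
by rewrite exchange_big /=; apply: eq_bigr => P _; rewrite /cross /cutE big_distrr.
Qed.

End FlowDecomposition.

Lemma flow_cut_even f (Y : {set V}) : is_flow par v T f -> (forall s, s \in St -> s \notin Y) ->
  ~~ odd (cutE par v Y f).
Proof.
case=> g f_g HY; rewrite (cutE_flow f_g).
apply: sum_even => P /terminal_pairP [s [s' [Hs Hs' _ ->]]].
by rewrite oddM odd_cross2 ?Sterm_Ve // (negbTE (HY _ Hs)) (negbTE (HY _ Hs')) andbF.
Qed.

Section BlockingFlow.
Variable f : V -> nat.
Hypothesis blocking_f : blocking par r v T c f.
Local Notation X := (Vf par v c f).
Local Notation rest := (rest par v St X).
Local Notation comp := (Defs.comp par v St X).
Local Notation odds := (oddsets par v St X c).

Lemma flow_f : is_flow par v T f.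
Proof. by case: blocking_f => -[]. Qed.

Lemma f_le_c z : z \in Ee -> f z <= c z.
Proof. by move=> HzE; case: blocking_f => -[_ Hle] _ _ _; apply: Hle. Qed.

Lemma u_notin_Vf_Te t : t \in Te -> u \notin X t.
Proof.
move=> Ht; case: blocking_f => _ /(_ t Ht) [_ _ EXt] _ _.
apply: contra (Te_neq_u Ht) => HuX.
have : u \in X t :&: St by rewrite inE HuX u_Sterm.
by rewrite EXt in_set1 eq_sym.
Qed.

Lemma disjoint_Vf_u_Te t : t \in Te -> [disjoint X u & X t].
Proof.
move=> Ht; rewrite disjoint_subset; apply/subsetP => w Hwu; rewrite inE.
by apply: contra (u_notin_Vf_Te Ht); exact: Vf_meet_u (Ee_Ve (Te_Ee Ht)) Hwu.
Qed.

Lemma Vf_tset s : s \in St -> tset par v T (X s) s.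
Proof.
rewrite StermE => /orP [/eqP ->|Ht]; last by case: blocking_f => _ Htset _ _; exact: Htset.
split; [by apply/subsetP => w /Vf_uP [] | exact: Vf_u_connected |].
apply/setP => y; rewrite in_setI in_set1 StermE.
have [->|Hyu] := eqVneq y u; first by rewrite Vf_self ?u_Ve.
rewrite /=; case Hy: (y \in Te); rewrite ?andbF // andbT.
exact: disjointsFl (disjoint_Vf_u_Te Hy) (Vf_self c f (Ee_Ve (Te_Ee Hy))).
Qed.

Lemma Vf_disjoint s s' : s \in St -> s' \in St -> s != s' -> [disjoint X s & X s'].
Proof.
rewrite !StermE => /orP [/eqP ->|Hs] /orP [/eqP ->|Hs']; rewrite ?eqxx // => Hss'.
- exact: disjoint_Vf_u_Te.
- by rewrite disjoint_sym; exact: disjoint_Vf_u_Te.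
by case: blocking_f => _ _ Hdisj _; exact: Hdisj.
Qed.

Lemma Vf_Sterm_self s : s \in St -> s \in X s.
Proof. by move/Sterm_Ve; exact: (Vf_self c f). Qed.

Lemma Vf_Sterm_uniq s s' w : s \in St -> s' \in St -> w \in X s -> w \in X s' -> s = s'.
Proof.
move=> Hs Hs' Hws Hws'; apply/eqP; apply: contraTT Hws => Hss'.
by rewrite (disjointsFl (Vf_disjoint Hs Hs' Hss') Hws').
Qed.

Lemma Vf_StermE s s' : s \in St -> s' \in St -> (s' \in X s) = (s' == s).
Proof.
move=> Hs Hs'; apply/idP/eqP => [Hs's|->]; last exact: Vf_Sterm_self.
exact: Vf_Sterm_uniq Hs' Hs (Vf_Sterm_self Hs') Hs's.
Qed.

Lemma sum_family_cutE h :
  \sum_(Y in Defs.family St X) cutE par v Y h = \sum_(s in St) cutE par v (X s) h.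
Proof.
rewrite big_imset // => s s' Hs Hs' EX.
by have Hss := Vf_Sterm_self Hs; apply: (Vf_Sterm_uniq Hs Hs' Hss); rewrite -EX.
Qed.

Lemma notin_rest_Vf x : x \in Ve -> x \notin rest -> exists2 s, s \in St & x \in X s.
Proof.
move=> Hx; rewrite in_setD Hx andbT negbK => /bigcupP [_ /imsetP [s Hs ->]].
by exists s.
Qed.

Lemma rest_notin_Vf x s : x \in rest -> s \in St -> x \notin X s.
Proof. by case/restP => _ H /H. Qed.

Lemma comp_notin_Sterm w s : w \in rest -> s \in St -> s \notin comp w.
Proof.
move=> Hw Hs; apply: contraTN (Vf_Sterm_self Hs) => Hsw.
exact: rest_notin_Vf (comp_rest Hw Hsw) Hs.
Qed.

Lemma comp_cut_even f' w : is_flow par v T f' -> w \in rest -> ~~ odd (cutE par v (comp w) f').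
Proof. by move=> Hf' Hw; apply: flow_cut_even Hf' _ => s; exact: comp_notin_Sterm. Qed.

Lemma Vf_top_residual0 s z : s \in St -> z \in Ee -> z \in X s -> par z \notin X s ->
  c z - f z = 0.
Proof.
rewrite StermE => /orP [/eqP ->|Ht] HzE Hz; first by rewrite Vf_u_par.
by move=> Hpz; apply/eqP; rewrite subn_eq0; exact: Vf_top_saturated (Ee_Ve (Te_Ee Ht)) HzE Hz Hpz.
Qed.

Lemma Vf_bottom_residual_le1 s z : s \in St -> z \in Ee -> par z \in X s -> z \notin X s ->
  c z - f z <= 1.
Proof.
move=> Hs HzE Hpz; apply: contraNT; rewrite -ltnNge ltn_subRL addn1 => Hres.
by apply: Vf_child (Sterm_Ve Hs) HzE Hpz _; rewrite addn2.
Qed.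

Lemma in_comp_par w z : w \in rest -> z \in Ee -> z \in rest -> par z \in rest ->
  (z \in comp w) = (par z \in comp w).
Proof.
move=> Hw HzE Hz Hpz; apply/idP/idP => H; rewrite -(comp_eq H).
  by apply: comp_adj; rewrite // /adjE HzE eqxx orbT.
by apply: comp_adj; rewrite // /adjE HzE eqxx.
Qed.

Lemma comp_residual_cut_edge w z : w \in rest -> z \in Ee -> in_cut (comp w) z ->
  0 < c z - f z -> [/\ z \in comp w, par z \notin comp w & c z - f z <= 1].
Proof.
move=> Hw HzE; rewrite /in_cut.
case Hpz: (par z \in comp w); case Hz: (z \in comp w) => //= _ Hres.
  have Hpr := comp_rest Hw Hpz.
  have [Hzr|/(notin_rest_Vf (Ee_Ve HzE)) [s Hs Hzs]] := boolP (z \in rest).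
    by rewrite (in_comp_par Hw HzE Hzr Hpr) Hpz in Hz.
  by rewrite (Vf_top_residual0 Hs HzE Hzs (rest_notin_Vf Hpr Hs)) in Hres.
have Hzr := comp_rest Hw Hz; split=> //.
have [Hpr|/(notin_rest_Vf (par_Ee HzE)) [s Hs Hps]] := boolP (par z \in rest).
  by rewrite -(in_comp_par Hw HzE Hzr Hpr) Hz in Hpz.
exact: Vf_bottom_residual_le1 Hs HzE Hps (rest_notin_Vf Hzr Hs).
Qed.

Lemma comp_residual_le1 w : w \in rest -> cutE par v (comp w) (fun z => c z - f z) <= 1.
Proof.
move=> Hw; rewrite /cutE.
have [z1 /and3P [Hz1E Hz1 Hres1]|Hnone] :=
  pickP (fun z => [&& z \in Ee, in_cut (comp w) z & 0 < c z - f z]); last first.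
  rewrite big1 // => z /andP [HzE Hz].
  by move: (Hnone z); rewrite /in_cut HzE Hz lt0n => /negbFE /eqP.
have [Hz1w Hpz1w Hle1] := comp_residual_cut_edge Hw Hz1E Hz1 Hres1.
rewrite (bigD1 z1) /= ?Hz1E // big1 ?addn0 // => z /andP [/andP [HzE Hz] Hzz1].
apply/eqP; rewrite -leqn0 leqNgt; apply: contra Hzz1 => Hres.
have [Hzw Hpzw _] := comp_residual_cut_edge Hw HzE Hz Hres.
by rewrite (comp_top_uniq Hzw Hpzw Hz1w Hpz1w).
Qed.

Lemma oddsetsP W : W \in odds -> exists2 w, w \in rest & W = comp w.
Proof. by rewrite inE => /andP [/imsetP [w Hw ->] _]; exists w. Qed.

Lemma oddset_residual W : W \in odds -> cutE par v W (fun z => c z - f z) = 1.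
Proof.
move=> /[dup] /oddsetsP [w Hw ->]; rewrite inE => /andP [_].
rewrite (cutE_split _ f_le_c) oddD (negbTE (comp_cut_even flow_f Hw)) /=.
by case: (cutE _ _ _) (comp_residual_le1 Hw) => [|[|]].
Qed.

Lemma oddset_in W x : W \in odds -> x \in W -> x \in rest /\ W = comp x.
Proof. by case/oddsetsP => w Hw -> Hx; rewrite (comp_eq Hx) (comp_rest Hw Hx). Qed.

Lemma oddset_in_cut W z : W \in odds -> z \in Ee -> in_cut W z ->
  [/\ z \in rest, par z \notin rest & W = comp z] \/
  [/\ z \notin rest, par z \in rest & W = comp (par z)].
Proof.
move=> HW HzE; rewrite /in_cut.
case Hpz: (par z \in W); case Hz: (z \in W) => //= _.
  have [Hpr EW] := oddset_in HW Hpz; right; split=> //.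
  by apply: contraFN Hz => Hzr; rewrite EW; apply: comp_adj; rewrite // /adjE HzE eqxx.
have [Hzr EW] := oddset_in HW Hz; left; split=> //.
by apply: contraFN Hpz => Hpr; rewrite EW; apply: comp_adj; rewrite // /adjE HzE eqxx orbT.
Qed.

Lemma oddset_in_cut_uniq z W W' : z \in Ee ->
  W \in odds -> in_cut W z -> W' \in odds -> in_cut W' z -> W = W'.
Proof.
move=> HzE HW Hz HW' Hz'.
case: (oddset_in_cut HW HzE Hz) => -[Hr Hpr ->];
  case: (oddset_in_cut HW' HzE Hz') => -[Hr' Hpr' ->] //.
- by rewrite Hr in Hr'.
- by rewrite Hr' in Hr.
Qed.

Lemma oddset_in_cut_Vf W z : W \in odds -> z \in Ee -> in_cut W z ->
  exists2 s, s \in St & in_cut (X s) z.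
Proof.
move=> HW HzE Hz; case: (oddset_in_cut HW HzE Hz) => -[Hr Hpr _].
  have [s Hs Hps] := notin_rest_Vf (par_Ee HzE) Hpr.
  by exists s; rewrite // /in_cut Hps (negbTE (rest_notin_Vf Hr Hs)).
have [s Hs Hzs] := notin_rest_Vf (Ee_Ve HzE) Hr.
by exists s; rewrite // /in_cut Hzs (negbTE (rest_notin_Vf Hpr Hs)).
Qed.

Lemma comp_oddset z : z \in Ee -> z \in rest -> par z \notin rest -> 0 < c z - f z ->
  comp z \in odds.
Proof.
move=> HzE Hzr Hpr Hres.
have Hres1 : cutE par v (comp z) (fun z => c z - f z) = 1.
  apply/eqP; rewrite eqn_leq comp_residual_le1 //= /cutE (bigD1 z) /=.
    exact: leq_trans Hres (leq_addr _ _).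
  by rewrite HzE /in_cut comp_self addbT; apply: contra Hpr; exact: comp_rest.
rewrite inE imset_f //= (cutE_split _ f_le_c) oddD Hres1.
by rewrite (negbTE (comp_cut_even flow_f Hzr)).
Qed.

Lemma mult_oddset_le z : z \in Ee ->
  \sum_(W in odds) (in_cut W z : nat) <= \sum_(s in St) (in_cut (X s) z : nat).
Proof.
move=> HzE; have [W /andP [HW Hz]|Hnone] := pickP (fun W => (W \in odds) && in_cut W z).
  have [s Hs Hzs] := oddset_in_cut_Vf HW HzE Hz.
  apply: (@leq_trans 1); last by rewrite (bigD1 s) //= Hzs.
  by apply: sum_bool_le1 => W1 W2; exact: oddset_in_cut_uniq.
by rewrite sum_bool_eq0 // => W HW; move: (Hnone W); rewrite HW => /negbT.
Qed.

Lemma mult_Vf_residual z : z \in Ee -> 0 < c z - f z ->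
  \sum_(s in St) (in_cut (X s) z : nat) = \sum_(W in odds) (in_cut W z : nat).
Proof.
move=> HzE Hres.
have no_oddset : (z \in rest) = (par z \in rest) ->
    \sum_(W in odds) (in_cut W z : nat) = 0.
  move=> Hends; apply: sum_bool_eq0 => W HW; apply/negP => Hz.
  case: (oddset_in_cut HW HzE Hz) => -[Hr Hpr _].
    by rewrite Hr (negbTE Hpr) in Hends.
  by rewrite Hpr (negbTE Hr) in Hends.
have [Hzr|Hzr] := boolP (z \in rest).
  have [Hpr|Hpr] := boolP (par z \in rest).
    rewrite no_oddset ?Hzr ?Hpr // sum_bool_eq0 // => s Hs.
    by rewrite /in_cut !(negbTE (rest_notin_Vf _ Hs)).
  have [s0 Hs0 Hps0] := notin_rest_Vf (par_Ee HzE) Hpr.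
  have HW0 := comp_oddset HzE Hzr Hpr Hres.
  have Hz0 : in_cut (comp z) z.
    by rewrite /in_cut comp_self addbT; apply: contra Hpr; exact: comp_rest.
  rewrite (sum_bool_eq1 HW0 Hz0); last by move=> W HW Hz; exact: oddset_in_cut_uniq HW Hz HW0 Hz0.
  apply: (sum_bool_eq1 Hs0); first by rewrite /in_cut Hps0 (negbTE (rest_notin_Vf Hzr Hs0)).
  move=> s Hs; rewrite /in_cut (negbTE (rest_notin_Vf Hzr Hs)) addbF => Hps.
  exact: Vf_Sterm_uniq Hs Hs0 Hps Hps0.
have [s0 Hs0 Hzs0] := notin_rest_Vf (Ee_Ve HzE) Hzr.
have Hps0 : par z \in X s0.
  by apply: contraTT Hres => /(Vf_top_residual0 Hs0 HzE Hzs0) ->.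
have Hpr : par z \notin rest by apply: contraL Hps0 => /rest_notin_Vf; apply.
rewrite no_oddset ?(negbTE Hzr) ?(negbTE Hpr) // sum_bool_eq0 // => s Hs.
have [->|Hss0] := eqVneq s s0; first by rewrite /in_cut Hzs0 Hps0.
have Hdisj := Vf_disjoint Hs Hs0 Hss0.
by rewrite /in_cut (disjointsFl Hdisj Hzs0) (disjointsFl Hdisj Hps0).
Qed.

Lemma gamma_Vf : gamma par v St X c = \sum_(s in St) cutE par v (X s) f + kappa par v St X c.
Proof.
(* Edgewise, c * m = f * m + (c - f) * k, where m and k count the sets of the
   cut-system and the odd sets whose cut contains the edge. *)
rewrite /gamma sum_family_cutE /kappa -sum1_card.
under [\sum_(W in odds) 1]eq_bigr => W HW do rewrite -(oddset_residual HW).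
rewrite !sum_cutE -big_split; apply: eq_bigr => z HzE /=.
rewrite -{1}(subnKC (f_le_c HzE)) mulnDl; congr (_ + _).
by have [->|/(mult_Vf_residual HzE) ->] := posnP (c z - f z); rewrite ?mul0n.
Qed.

Lemma gamma_Vf_ge f' : feasible par v T c f' ->
  \sum_(s in St) cutE par v (X s) f' + kappa par v St X c <= gamma par v St X c.
Proof.
case=> Hf' Hle; rewrite /gamma sum_family_cutE /kappa -sum1_card.
apply: (@leq_trans (\sum_(s in St) cutE par v (X s) f' +
                    \sum_(W in odds) cutE par v W (fun z => c z - f' z))).
  rewrite leq_add2l; apply: leq_sum => W HW; have [w Hw EW] := oddsetsP HW.
  move: HW; rewrite inE (cutE_split _ Hle) oddD EW (negbTE (comp_cut_even Hf' Hw)) /=.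
  by case/andP => _ /odd_gt0.
rewrite !sum_cutE -big_split leq_sum // => z HzE /=.
rewrite -{2}(subnKC (Hle z HzE)) mulnDl leq_add2l leq_mul2l.
by rewrite mult_oddset_le ?orbT.
Qed.

Lemma alpha2_le_Vf f' : is_flow par v T f' ->
  alpha2 par v T f' <= \sum_(s in St) cutE par v (X s) f'.
Proof.
case=> g f'_g; apply: leq_sum => s Hs; rewrite !(cutE_flow f'_g).
apply: leq_sum => P HP; rewrite leq_mul2l; apply/orP; right.
have -> : cross P [set s] = on_pair P (term_edge s) by exact: cutE1.
case Hon: (on_pair P (term_edge s)) => //.
have [a [b [Ha Hb _ EP]]] := terminal_pairP HP.
apply: odd_gt0.
rewrite EP odd_cross2 ?Sterm_Ve // !Vf_StermE // -!in_set1 -odd_cross2 ?Sterm_Ve //.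
by rewrite -EP /cross cutE1 // Hon.
Qed.

Lemma Vf_u_in_cut z : z \in Ee -> in_cut (X u) z -> par z \in X u /\ z \notin X u.
Proof.
move=> HzE; rewrite /in_cut; case Hz: (z \in X u); last by rewrite addbF.
by rewrite (Vf_u_par Hz HzE).
Qed.

Section MaximalBlockingFlow.
Hypothesis f_max : forall f' : V -> nat, blocking par r v T c f' -> f' v <= f v.

Section Augment.
Variable g : {set V} -> nat.
Hypothesis f_g : forall z, z \in Ee ->
  f z = \sum_(P : {set V} | [&& P \subset St, #|P| == 2 & on_pair P z]) g P.
Variables a b z0 : V.
Hypotheses (Ha : a \in Te) (Hb : b \in Te) (Hgab : 0 < g [set a; b]).
Hypotheses (Hpz0 : par z0 \in X u) (Hz0a : anc z0 a) (Hz0b : ~~ anc z0 b).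

(* Rerouting one unit of a-b flow as u-a plus u-b flow adds 2 exactly on the
   edges above both a and b; these lie in X u, where the slack is at least 2. *)
Let common z := [&& z \in Ee, anc z a & anc z b].
Let f2 z := f z + (common z).*2.
Let g2 P := g P - (P == [set a; b]) + (P == [set u; a]) + (P == [set u; b]).

Lemma common_Vf_u z : common z -> [/\ z \in X u, par z \in X u & f z + 2 <= c z].
Proof.
case/and3P => HzE Hza Hzb.
have Hzpz0 : anc z (par z0).
  case/orP: (anc_total Hza Hz0a) => [/anc_inv [Ezz0|//]|Hz0z].
    by move: Hz0b; rewrite -Ezz0 Hzb.
  by move: Hz0b; rewrite (anc_trans Hz0z Hzb).
have Hz := Vf_u_anc Hpz0 (Ee_Ve HzE) Hzpz0.
split=> //; first exact: Vf_u_par.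
by case/Vf_uP: Hpz0 => _; apply=> //; exact: Ee_nanc_u.
Qed.

Lemma f2_out z : z \notin X u -> f2 z = f z.
Proof.
rewrite /f2; case Hc: (common z); last by rewrite addn0.
by case: (common_Vf_u Hc) => ->.
Qed.

Lemma f2_out_par z : par z \notin X u -> f2 z = f z.
Proof.
rewrite /f2; case Hc: (common z); last by rewrite addn0.
by case: (common_Vf_u Hc) => _ ->.
Qed.

Lemma f2_flow : is_flow par v T f2.
Proof.
have Hu_ab : u \notin [set a; b].
  by rewrite in_set2 ![u == _]eq_sym (negbTE (Te_neq_u Ha)) (negbTE (Te_neq_u Hb)).
have ab_neq_u x : [set a; b] != [set u; x].
  by apply: contraNneq Hu_ab => ->; rewrite !inE eqxx.
have Hab : a != b by apply: contraNneq Hz0b => <-.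
exists g2 => z HzE; rewrite /f2 /common HzE /=.
set q := fun P : {set V} => [&& P \subset St, #|P| == 2 & on_pair P z].
have on_path_q x y : x \in St -> y \in St -> x != y ->
    (on_path x y z : nat) = \sum_(P | q P) (P == [set x; y] : nat).
  by move=> Hx Hy Hxy; rewrite sum_pred1_cond /q terminal_pair_on_path.
have on_path_u x : on_path u x z = anc z x by rewrite /on_path (negbTE (Ee_nanc_u HzE)).
apply/esym/addn_xor_and; rewrite -[anc z a (+) anc z b]/(on_path a b z).
have Hu x : x \in Te -> u != x by move=> Hx; rewrite eq_sym Te_neq_u.
rewrite -!on_path_u !on_path_q ?u_Sterm ?Te_Sterm ?Hu // (f_g HzE).
rewrite -!big_split; apply: eq_bigr => P _ /=.
rewrite /g2; have [->|_] := eqVneq P [set a; b]; last by rewrite subn0 addn0.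
by rewrite (negbTE (ab_neq_u a)) (negbTE (ab_neq_u b)) !addn0 subnK.
Qed.

Lemma f2_feasible : feasible par v T c f2.
Proof.
split; first exact: f2_flow.
move=> z HzE; rewrite /f2; case Hc: (common z); last by rewrite addn0 f_le_c.
by case: (common_Vf_u Hc).
Qed.

Lemma Vf_f2 t : t \in Te -> Vf par v c f2 t = X t.
Proof.
move=> Ht; apply: Vf_eq _ (Ee_Ve (Te_Ee Ht)) _ => [z|z Hz]; first exact: leq_addr.
by apply: f2_out; rewrite (disjointsFl (disjoint_Vf_u_Te Ht) Hz).
Qed.

Lemma f2_blocking : blocking par r v T c f2.
Proof.
have Efam : Defs.family Te (Vf par v c f2) = Defs.family Te X.
  by apply: eq_in_imset => t Ht; exact: Vf_f2.
case: blocking_f => _ Htset Hdisj Hblocked; split.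
- exact: f2_feasible.
- by move=> t Ht; rewrite Vf_f2 //; exact: Htset.
- by move=> t t' Ht Ht' Htt'; rewrite !Vf_f2 //; exact: Hdisj.
move=> t Ht; have [EXt [Hft Hcut]] := Hblocked t Ht.
rewrite (Vf_f2 Ht).
have Hout w : w \in X t -> w \notin X u.
  by move=> Hw; rewrite (disjointsFl (disjoint_Vf_u_Te Ht) Hw).
have Ecut : cutE par v (X t) f2 = cutE par v (X t) f.
  apply: eq_bigr => z /andP [_]; rewrite /in_cut.
  case Hpz: (par z \in X t); case Hz: (z \in X t) => //= _; last exact: f2_out (Hout _ Hz).
  exact: f2_out_par (Hout _ Hpz).
have Eodd : Defs.oddX par r v Te (Vf par v c f2) c (X t) = Defs.oddX par r v Te X c (X t).
  by rewrite /Defs.oddX /oddsets /Defs.comp /Defs.rest Efam.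
split; first exact: EXt.
rewrite /blocked Ecut Eodd f2_out; first by split.
exact: Hout (Vf_Sterm_self (Te_Sterm Ht)).
Qed.

Lemma no_augmenting_pair : False.
Proof.
have Hv : common v by rewrite /common v_Ee -!EeE !Te_Ee.
have := f_max f2_blocking; rewrite /f2 Hv.
by rewrite -{2}[f v]addn0 leq_add2l.
Qed.

End Augment.

Lemma cross_u_Te t : t \in Te -> cross [set u; t] (X u) = cross [set u; t] [set u].
Proof.
move=> Ht; have HtVe := Ee_Ve (Te_Ee Ht).
have -> : cross [set u; t] [set u] = 1.
  rewrite /cross cutE1 ?u_Sterm // /term_edge eqxx on_pair2 /on_path.
  by rewrite (negbTE (Ee_nanc_u v_Ee)) -EeE Te_Ee.
have Hodd : odd (cross [set u; t] (X u)).
  rewrite odd_cross2 ?u_Ve // (Vf_self c f u_Ve).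
  by rewrite (disjointsFl (disjoint_Vf_u_Te Ht) (Vf_self c f HtVe)).
apply/eqP; rewrite eqn_leq odd_gt0 // andbT /cross /cutE.
apply: sum_bool_le1 => z1 z2 /andP [Hz1E Hz1] + /andP [Hz2E Hz2].
rewrite !on_pair2 /on_path (negbTE (Ee_nanc_u Hz1E)) (negbTE (Ee_nanc_u Hz2E)) /= => Hz1t Hz2t.
have [Hpz1 Hz1u] := Vf_u_in_cut Hz1E Hz1; have [Hpz2 Hz2u] := Vf_u_in_cut Hz2E Hz2.
case/orP: (anc_total Hz1t Hz2t) => /anc_inv [->//|H].
  by rewrite (Vf_u_anc Hpz2 (Ee_Ve Hz1E) H) in Hz1u.
by rewrite (Vf_u_anc Hpz1 (Ee_Ve Hz2E) H) in Hz2u.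
Qed.

Lemma Vf_u_cut : cutE par v (X u) f = f v.
Proof.
case: flow_f => g f_g.
have -> : f v = cutE par v [set u] f by rewrite cutE1 ?u_Sterm // /term_edge eqxx.
rewrite !(cutE_flow f_g); apply: eq_bigr => P /terminal_pairP [x [y [Hx Hy Hxy ->]]].
have [Exu|Hxu] := eqVneq x u.
  by rewrite Exu cross_u_Te //; rewrite StermE -Exu eq_sym (negbTE Hxy) in Hy.
have [Eyu|Hyu] := eqVneq y u.
  by rewrite Eyu setUC cross_u_Te //; rewrite StermE -Eyu (negbTE Hxy) in Hx.
rewrite StermE (negbTE Hxu) in Hx; rewrite StermE (negbTE Hyu) in Hy.
rewrite {2}/cross cutE1 ?u_Sterm // /term_edge eqxx on_pair2 /on_path -!EeE !Te_Ee // muln0.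
have [->|Hg] := posnP (g [set x; y]); first by rewrite mul0n.
rewrite /cross /cutE sum_bool_eq0 ?muln0 // => z /andP [HzE Hcut].
have [Hpz _] := Vf_u_in_cut HzE Hcut.
rewrite on_pair2 /on_path; case Hzx: (anc z x); case Hzy: (anc z y) => //=.
  by case: (no_augmenting_pair f_g Hx Hy Hg Hpz Hzx (negbT Hzy)).
by rewrite setUC in Hg; case: (no_augmenting_pair f_g Hy Hx Hg Hpz Hzy (negbT Hzx)).
Qed.

Lemma sum_cutE_Vf : \sum_(s in St) cutE par v (X s) f = alpha2 par v T f.
Proof.
rewrite alpha2E /Sterm big_setU1 ?u_notin_Te //= Vf_u_cut; congr (_ + _).
by apply: eq_bigr => t Ht; case: blocking_f => _ _ _ /(_ t Ht) [_ [<-]].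
Qed.

End MaximalBlockingFlow.

End BlockingFlow.

End Terminals.

End Subtree.
End RootedTree.

Theorem lemma2 (V : finType) (par : V -> V) (r : V) (T : {set V})
  (c : V -> nat) (v : V) (f : V -> nat) :
  is_rooted_tree par r ->
  standing par r T c ->
  r \in T ->
  v != r ->
  (* f is a blocking flow in I(e), e = (par v, v), with f(e) = max Psi(e) *)
  blocking par r v T c f ->
  (forall f' : V -> nat, blocking par r v T c f' -> f' v <= f v) ->
  [/\ (* cut-system *)
      forall t, t \in Sterm par v T -> tset par v T (Vf par v c f t) t,
      forall t t', t \in Sterm par v T -> t' \in Sterm par v T -> t != t' ->
        [disjoint Vf par v c f t & Vf par v c f t'],
      (* 2 alpha(f) = f(e) + sum_{t in T_e} f(e_t) *)
      alpha2 par v T f = f v + \sum_(t in Te par v T) f t,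
      (* 2 alpha(f) = gamma(X) - kappa(X) *)
      alpha2 par v T f + kappa par v (Sterm par v T) (Vf par v c f) c
        = gamma par v (Sterm par v T) (Vf par v c f) c &
      (* f is a maximum feasible flow in I(e) *)
      forall f' : V -> nat, feasible par v T c f' ->
        alpha2 par v T f' <= alpha2 par v T f].
Proof.
move=> tree standing_Tc _ v_neq_r blocking_f f_max.
have sum_f := sum_cutE_Vf tree v_neq_r standing_Tc blocking_f f_max.
split.
- exact: (Vf_tset tree v_neq_r blocking_f).
- exact: (Vf_disjoint tree v_neq_r blocking_f).
- exact: (alpha2E tree v_neq_r standing_Tc).
- by rewrite (gamma_Vf tree v_neq_r blocking_f) sum_f.
move=> f' feasible_f'; rewrite -sum_f.
have := gamma_Vf_ge tree v_neq_r blocking_f feasible_f'.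
rewrite (gamma_Vf tree v_neq_r blocking_f) leq_add2r; apply: leq_trans.
by apply: (alpha2_le_Vf tree v_neq_r standing_Tc blocking_f); case: feasible_f'.
Qed.
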